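(* Let $\mathcal X$ be finite and $P_0,P_1,\hat P_0,\hat P_1$ distributions on $\mathcal X$ with full support satisfying $$0<D(P_0\|\hat P_1)-D(P_0\|\hat P_0),\qquad 0<D(P_1\|\hat P_0)-D(P_1\|\hat P_1).$$ Let $x_1,x_2,\dots$ be i.i.d. $P_0$, $\hat S_n=\sum_{i=1}^n\log\frac{\hat P_0(x_i)}{\hat P_1(x_i)}$, and for $\hat\gamma_0>0$ let $\hat\tau_0=\inf\{n\ge1:\hat S_n\ge\hat\gamma_0\}$. Define $\hat\kappa(s)=\log\mathbb E_{P_0}\big[(\hat P_1(X)/\hat P_0(X))^s\big]$, $E(0)=\sup_{s\ge0}\{-\hat\kappa(s)\}$ and let $d$ be the maximizing $s$. Then $E(0)>0$, $d>0$, and for every $n\ge1$, $$\mathbb P_0[\hat\tau_0\ge n]\le e^{d\hat\gamma_0}e^{-(n-1)E(0)}.$$ Moreover, $\hat\tau_0\to\infty$ almost surely as $\hat\gamma_0\to\infty$.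
   Context: $D$ is relative entropy; $\mathbb P_0,\mathbb E_{P_0}$ refer to i.i.d. observations with distribution $P_0$. $\hat\tau_0$ is the first time the mismatched log-likelihood ratio random walk of a sequential probability ratio test with test distributions $\hat P_0,\hat P_1$ crosses the upper threshold $\hat\gamma_0$. *)

From HB Require Import structures.
From mathcomp Require Import all_boot all_order all_algebra.
From mathcomp Require Import all_classical all_reals all_analysis.
Set Implicit Arguments. Unset Strict Implicit. Unset Printing Implicit Defensive.
Import Order.TTheory GRing.Theory Num.Theory.
Local Open Scope classical_set_scope.
Local Open Scope ring_scope.

Section Defs.
Variables (R : realType) (X : finType).

Definition fullsupp_dist (P : X -> R) : Prop :=
  (forall a, 0 < P a) /\ \sum_(a : X) P a = 1.

Definition relent (P Q : X -> R) : R := \sum_(a : X) P a * ln (P a / Q a).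

Definition llr (Ph0 Ph1 : X -> R) (a : X) : R := ln (Ph0 a / Ph1 a).

(* \hat S_k for the sample path x (x_1 = x 0, x_2 = x 1, ...) *)
Definition Shat (Ph0 Ph1 : X -> R) (x : nat -> X) (k : nat) : R :=
  \sum_(i < k) llr Ph0 Ph1 (x i).

(* \hat tau_0 = inf {n >= 1 : \hat S_n >= g}; None encodes +infinity *)
Definition tauhat (Ph0 Ph1 : X -> R) (g : R) (x : nat -> X) : option nat :=
  match pselect (exists n, (1 <= n)%N /\ g <= Shat Ph0 Ph1 x n) with
  | left H =>
      Some (ex_minn (P := fun n => `[< (1 <= n)%N /\ g <= Shat Ph0 Ph1 x n >])
              (let: ex_intro n Hn := H in ex_intro _ n (asboolT Hn)))
  | right _ => None
  end.

Definition ge_ext (t : option nat) (n : nat) : Prop :=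
  match t with None => True | Some m => (n <= m)%N end.

(* Probability, under x_1, x_2, ... i.i.d. P, of an event E on sample paths
   that is determined by the first m coordinates: sum over the length-m
   prefixes t of P^m(t) times the indicator that E holds for every path
   with prefix t. *)
Definition iid_prob (P : X -> R) (m : nat) (E : set (nat -> X)) : R :=
  \sum_(t : {ffun 'I_m -> X})
     (\prod_(i < m) P (t i)) *
     (if `[< forall x : nat -> X, (forall i : 'I_m, x i = t i) -> E x >]
      then 1 else 0).

Definition kappahat (P0 Ph0 Ph1 : X -> R) (s : R) : R :=
  ln (\sum_(a : X) P0 a * (Ph1 a / Ph0 a) `^ s).

Definition E0 (P0 Ph0 Ph1 : X -> R) : R :=
  sup [set y | exists2 s : R, 0 <= s & y = - kappahat P0 Ph0 Ph1 s].

End Defs.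

(* Write [c := llr Ph1 Ph0], so that [kappahat s = ln E[expR (s c)]] is the log
   mgf of [c] under [P0], with [E[c] = D(P0 || Ph0) - D(P0 || Ph1) < 0]. The mgf
   equals [1] at [0], has negative slope there, and tends to [+oo] because
   [c] takes a positive value (distributions with [Ph1 <= Ph0] pointwise are
   equal); so it attains its minimum [expR (- E(0)) < 1] at some
   [d > 0]. If [tauhat >= n] then [Shat_(n-1) < g], i.e.
   [expR (d (g + \sum_(i < n-1) c (x i))) >= 1], and averaging over the i.i.d.
   prefix gives the Chernoff bound [expR (d g) * mgf(d)^(n-1)]. Finally
   [tauhat >= N] as soon as [g] exceeds every [|Shat_k|], [k < N]. *)

From HB Require Import structures.
From mathcomp Require Import all_boot all_order all_algebra.
From mathcomp Require Import all_classical all_reals all_analysis.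
From mathcomp Require Import ring lra.
Set Implicit Arguments. Unset Strict Implicit. Unset Printing Implicit Defensive.
Import Order.TTheory GRing.Theory Num.Theory.
Import numFieldNormedType.Exports.
Local Open Scope classical_set_scope.
Local Open Scope ring_scope.

Lemma expR_le_quadratic (R : realType) (y : R) :
  y <= 1 / 2 -> expR y <= 1 + y + 2 * y ^+ 2.
Proof.
move=> y_le.
have expRN_ge : (1 - y) * expR y <= 1.
  have := ler_wpM2r (ltW (expR_gt0 y)) (expR_ge1Dx (- y)).
  by rewrite -expRD addNr expR0.
have := expR_gt0 y; nra.
Qed.

Section MomentGeneratingFunction.
Variables (R : realType) (X : finType) (P c : X -> R).
Hypothesis P_ge0 : forall a, 0 <= P a.

Definition mgf (s : R) : R := \sum_(a : X) P a * expR (s * c a).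

Lemma continuous_mgf : continuous mgf.
Proof.
rewrite /mgf; apply: (continuous_big add_continuous) => a _ s.
apply: (@continuousM R R (fun=> P a) (fun s => expR (s * c a))).
  exact: cst_continuous.
apply: (@continuous_comp R R R (fun s => s * c a) expR).
  by apply: (@continuousM R R id (fun=> c a)); [exact: cvg_id | exact: cst_continuous].
exact: continuous_expR.
Qed.

Lemma mgf_ge_term (a : X) (s : R) : P a * expR (s * c a) <= mgf s.
Proof.
rewrite /mgf (bigD1 a) //= lerDl; apply: sumr_ge0 => b _.
exact: mulr_ge0 (P_ge0 b) (expR_ge0 _).
Qed.

Lemma mgf_gt0 (a : X) (s : R) : 0 < P a -> 0 < mgf s.
Proof.
by move=> Pa_gt0; apply: lt_le_trans (mgf_ge_term a s); rewrite mulr_gt0 ?expR_gt0.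
Qed.

Hypothesis P_sum1 : \sum_(a : X) P a = 1.

Lemma mgf0 : mgf 0 = 1.
Proof. by rewrite /mgf; under eq_bigr do rewrite mul0r expR0 mulr1. Qed.

Lemma mgf_le_quadratic (s : R) : (forall a, `|s * c a| <= 1 / 2) ->
  mgf s <= 1 + s * \sum_a P a * c a + 2 * s ^+ 2 * \sum_a P a * c a ^+ 2.
Proof.
move=> sc_small.
have -> : 1 + s * \sum_a P a * c a + 2 * s ^+ 2 * \sum_a P a * c a ^+ 2 =
    \sum_a P a * (1 + s * c a + 2 * (s * c a) ^+ 2).
  rewrite -{1}P_sum1 !mulr_sumr -!big_split /=.
  by apply: eq_bigr => a _; ring.
apply: ler_sum => a _; apply: ler_wpM2l => //; apply: expR_le_quadratic.
exact: le_trans (ler_norm _) (sc_small a).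
Qed.

Lemma mgf_lt1 : \sum_a P a * c a < 0 -> exists2 s, 0 < s & mgf s < 1.
Proof.
move=> mean_lt0.
set mu := \sum_a P a * c a in mean_lt0.
set C := \sum_a `|c a| + 1.
set Q := \sum_a P a * c a ^+ 2.
have c_le_C a : `|c a| <= C.
  rewrite /C (bigD1 a) //= -addrA lerDl addr_ge0 //.
  by apply: sumr_ge0 => b _.
have C_gt0 : 0 < C by rewrite /C ltr_pwDr // sumr_ge0.
have Q_ge0 : 0 <= Q by apply: sumr_ge0 => a _; rewrite mulr_ge0 ?sqr_ge0.
set A := (2 * C)^-1; set B := - mu / (2 * Q + 1).
have AC : A * C = 1 / 2 by rewrite /A; field; lra.
have BQ : B * (2 * Q + 1) = - mu by rewrite /B; field; lra.
have [A_gt0 B_gt0] : 0 < A /\ 0 < B.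
  by split; [rewrite invr_gt0 | rewrite divr_gt0]; lra.
pose s := Num.min A B / 2.
have [s_gt0 s_le_A s_lt_B] : [/\ 0 < s, s <= A & s < B].
  by rewrite /s; case: (leP A B) => AB; split; lra.
have sC_le : s * C <= 1 / 2 by nra.
have sQ_lt : s * (2 * Q + 1) < - mu by nra.
have sc_small a : `|s * c a| <= 1 / 2.
  by rewrite normrM gtr0_norm //; apply: le_trans sC_le; rewrite ler_pM2l // c_le_C.
exists s => //; apply: le_lt_trans (mgf_le_quadratic sc_small) _.
rewrite -/mu -/Q; nra.
Qed.

Lemma mgf_gt1 (a : X) (s : R) : 0 < P a -> 0 < c a ->
  (P a * c a)^-1 < s -> 1 < mgf s.
Proof.
move=> Pa_gt0 ca_gt0 s_gt; have Pc_gt0 : 0 < P a * c a by rewrite mulr_gt0.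
have : 1 < s * (P a * c a) by rewrite -ltr_pdivrMr // div1r.
have := ler_wpM2l (ltW Pa_gt0) (expR_ge1Dx (s * c a)).
have := mgf_ge_term a s; nra.
Qed.

(* Coercivity: [mgf] exceeds [mgf 0] beyond [K], so its minimum over [[0, K]]
   is a minimum over [[0, +oo[]. *)
Lemma mgf_argmin (a : X) : 0 < P a -> 0 < c a ->
  exists2 d, 0 <= d & forall s, 0 <= s -> mgf d <= mgf s.
Proof.
move=> Pa_gt0 ca_gt0; set K := (P a * c a)^-1.
have K_ge0 : 0 <= K by rewrite invr_ge0 mulr_ge0 ?ltW.
have [d dK d_min] := EVT_min K_ge0 (continuous_subspaceT continuous_mgf).
move: (dK); rewrite in_itv /= => /andP[d_ge0 _].
exists d => // s s_ge0; have [sK|Ks] := leP s K.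
  by apply: d_min; rewrite in_itv /= s_ge0.
have mgfd_le1 : mgf d <= 1 by rewrite -mgf0; apply: d_min; rewrite in_itv /= lexx.
by apply: le_trans mgfd_le1 (ltW (mgf_gt1 Pa_gt0 ca_gt0 Ks)).
Qed.

Lemma iid_mgf (m : nat) (s : R) :
  \sum_(t : {ffun 'I_m -> X}) \prod_(i < m) (P (t i) * expR (s * c (t i))) =
  mgf s ^+ m.
Proof.
rewrite -(bigA_distr_bigA (fun=> fun a => P a * expR (s * c a))).
by rewrite prodr_const card_ord.
Qed.

Lemma iid_prob_le_mgf (a0 : X) (m : nat) (E : set (nat -> X)) (g s : R) :
  0 <= s -> (forall x, E x -> - g < \sum_(i < m) c (x i)) ->
  iid_prob P m E <= expR (s * g) * mgf s ^+ m.
Proof.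
move=> s_ge0 E_sum; rewrite -iid_mgf mulr_sumr; apply: ler_sum => t _.
rewrite big_split /= -expR_sum -mulr_sumr mulrA mulrAC.
have P_t_ge0 : 0 <= \prod_(i < m) P (t i) by apply: prodr_ge0.
case: asboolP => [E_t|_]; last by rewrite mulr0 !mulr_ge0 ?expR_ge0.
pose x k := if insub k is Some i then t i else a0.
have x_t (i : 'I_m) : x i = t i by rewrite /x valK.
have sum_gt : - g < \sum_(i < m) c (t i).
  by under eq_bigr do rewrite -x_t; exact: E_sum (E_t x x_t).
rewrite mulr1 ler_peMl // -expRD -mulrDr.
by apply: le_trans (expR_ge1Dx _); rewrite lerDl mulr_ge0 //; lra.
Qed.

End MomentGeneratingFunction.

Lemma sup_max (R : realType) (E : set R) (x : R) :
  E x -> ubound E x -> sup E = x.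
Proof.
move=> Ex ubx; apply/eqP; rewrite eq_le ge_sup //=; last by exists x.
by apply: ub_le_sup => //; exists x.
Qed.

Section LogLikelihoodRatio.
Variables (R : realType) (X : finType) (Q0 Q1 : X -> R).
Hypotheses (Q0_gt0 : forall a, 0 < Q0 a) (Q1_gt0 : forall a, 0 < Q1 a).

Lemma llrN (a : X) : llr Q0 Q1 a = - llr Q1 Q0 a.
Proof. by rewrite /llr !ln_div ?posrE // opprB. Qed.

Lemma kappahatE (P : X -> R) (s : R) :
  kappahat P Q0 Q1 s = ln (mgf P (llr Q1 Q0) s).
Proof.
congr ln; apply: eq_bigr => a _.
by rewrite /powR gt_eqF ?divr_gt0 // mulrC.
Qed.

Lemma mean_llr (P : X -> R) : (forall a, 0 < P a) ->
  \sum_a P a * llr Q1 Q0 a = relent P Q0 - relent P Q1.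
Proof.
move=> P_gt0; rewrite /relent -sumrB; apply: eq_bigr => a _.
by rewrite /llr !ln_div ?posrE //; ring.
Qed.

Lemma exists_llr_gt0 (P : X -> R) :
  \sum_a Q0 a = \sum_a Q1 a -> \sum_a P a * llr Q1 Q0 a != 0 ->
  exists a, 0 < llr Q1 Q0 a.
Proof.
move=> mass_eq mean_neq0.
have [//|no_pos] := pselect (exists a, 0 < llr Q1 Q0 a); exfalso.
have Q1_le a : Q1 a <= Q0 a.
  rewrite -ler_ln ?posrE // -subr_le0 -ln_div ?posrE // leNgt.
  by apply/negP => llr_gt0; apply: no_pos; exists a.
have Q1_eq a : Q1 a = Q0 a.
  have : \sum_b (Q0 b - Q1 b) = 0 by rewrite sumrB mass_eq subrr.
  move/psumr_eq0P => Q_diff0; apply/eqP; rewrite eq_sym -subr_eq0.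
  by apply/eqP/Q_diff0 => // b _; rewrite subr_ge0.
move/eqP: mean_neq0; apply; apply: big1 => a _.
by rewrite /llr Q1_eq divff ?gt_eqF // ln1 mulr0.
Qed.

End LogLikelihoodRatio.

Lemma Shat_lt_of_tauhat_ge (R : realType) (X : finType) (Ph0 Ph1 : X -> R)
    (g : R) (x : nat -> X) (m : nat) :
  0 < g -> ge_ext (tauhat Ph0 Ph1 g x) m.+1 -> Shat Ph0 Ph1 x m < g.
Proof.
move=> g_gt0; case: m => [|m]; first by rewrite /Shat big_ord0.
move=> tau_ge; rewrite ltNge; apply/negP => Shat_ge; move: tau_ge.
rewrite /tauhat; case: pselect => [hit|no_hit]; last first.
  by exfalso; apply: no_hit; exists m.+1.
case: ex_minnP => k _ k_min /=; apply/negP; rewrite -ltnNge ltnS.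
by apply: k_min; apply/asboolP.
Qed.

Lemma tauhat_ge_for_large_threshold (R : realType) (X : finType)
    (Ph0 Ph1 : X -> R) (x : nat -> X) (N : nat) :
  exists G : R, forall g : R, G < g -> ge_ext (tauhat Ph0 Ph1 g x) N.
Proof.
exists (\sum_(k < N) `|Shat Ph0 Ph1 x k|) => g G_lt.
rewrite /tauhat; case: pselect => [hit|//] /=.
case: ex_minnP => k /asboolP[_ Shat_ge] _; rewrite leqNgt; apply/negP => k_lt.
have : `|Shat Ph0 Ph1 x k| <= \sum_(k < N) `|Shat Ph0 Ph1 x k|.
  by rewrite (bigD1 (Ordinal k_lt)) //= lerDl sumr_ge0.
have := ler_norm (Shat Ph0 Ph1 x k); lra.
Qed.

Theorem lemma4 (R : realType) (X : finType) (P0 P1 Ph0 Ph1 : X -> R) :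
  fullsupp_dist P0 -> fullsupp_dist P1 ->
  fullsupp_dist Ph0 -> fullsupp_dist Ph1 ->
  0 < relent P0 Ph1 - relent P0 Ph0 ->
  0 < relent P1 Ph0 - relent P1 Ph1 ->
  [/\ 0 < E0 P0 Ph0 Ph1,
      (exists d : R, 0 <= d /\ - kappahat P0 Ph0 Ph1 d = E0 P0 Ph0 Ph1),
      (forall d : R, 0 <= d -> - kappahat P0 Ph0 Ph1 d = E0 P0 Ph0 Ph1 ->
         0 < d /\
         forall (g : R) (n : nat), 0 < g -> (1 <= n)%N ->
           iid_prob P0 n.-1 [set x | ge_ext (tauhat Ph0 Ph1 g x) n]
             <= expR (d * g) * expR (- ((n.-1)%:R * E0 P0 Ph0 Ph1)))
    & (forall (x : nat -> X) (N : nat),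
         exists G : R, forall g : R, G < g -> ge_ext (tauhat Ph0 Ph1 g x) N)].
Proof.
move=> [P0_gt0 P0_sum1] _ [Ph0_gt0 Ph0_sum1] [Ph1_gt0 Ph1_sum1] rel_gap _.
have P0_ge0 a : 0 <= P0 a by exact: ltW.
set c := llr Ph1 Ph0.
have kappaE : kappahat P0 Ph0 Ph1 = fun s => ln (mgf P0 c s).
  by apply/funext => s; rewrite kappahatE.
have mean_lt0 : \sum_a P0 a * c a < 0 by rewrite mean_llr //; lra.
have [a c_a_gt0] : exists a, 0 < c a.
  apply: (exists_llr_gt0 Ph0_gt0 Ph1_gt0 _ (ltr0_neq0 mean_lt0)).
  by rewrite Ph0_sum1 Ph1_sum1.
have mgf_pos s : 0 < mgf P0 c s by apply: mgf_gt0 (P0_gt0 a).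
have [d d_ge0 d_min] := mgf_argmin P0_ge0 P0_sum1 (P0_gt0 a) c_a_gt0.
have E0E : E0 P0 Ph0 Ph1 = - ln (mgf P0 c d).
  rewrite /E0 kappaE; apply: sup_max; first by exists d.
  by move=> _ [s s_ge0 ->]; rewrite lerN2 ler_ln ?posrE // d_min.
have E0_gt0 : 0 < E0 P0 Ph0 Ph1.
  have [s0 s0_gt0 mgf_s0_lt1] := mgf_lt1 P0_ge0 P0_sum1 mean_lt0.
  rewrite E0E oppr_gt0 (le_lt_trans (y := ln (mgf P0 c s0))) //.
    by rewrite ler_ln ?posrE // d_min // ltW.
  by rewrite ln_lt0 // mgf_pos.
split => //.
- by exists d; rewrite kappaE E0E.
- move=> d' d'_ge0; rewrite kappaE /= => kappa_d'.
  have mgf_d' : mgf P0 c d' = expR (- E0 P0 Ph0 Ph1).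
    by rewrite -kappa_d' opprK lnK ?posrE.
  split.
    rewrite lt_neqAle d'_ge0 andbT; apply/eqP => d'0.
    by move: E0_gt0; rewrite -kappa_d' -d'0 mgf0 // ln1 oppr0 ltxx.
  move=> g [//|m] g_gt0 _ /=.
  rewrite -mulrN expRM_natl -mgf_d'.
  apply: (iid_prob_le_mgf P0_ge0 a) => // x /(Shat_lt_of_tauhat_ge g_gt0).
  by rewrite /Shat; under eq_bigr do rewrite llrN //; rewrite sumrN ltrNl.
- exact: tauhat_ge_for_large_threshold.
Qed.
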